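(* Let $\lambda>0$, $\ell>0$. Every curve $\gamma\in\omega$ is embedded (injective on $[0,1]$).
   Context: Elliptic functions: for $q\in[0,1)$, $x\in\mathbb{R}$, $\mathrm{F}(x,q)=\int_0^x(1-q^2\sin^2\theta)^{-1/2}\,d\theta$, $\mathrm{E}(x,q)=\int_0^x(1-q^2\sin^2\theta)^{1/2}\,d\theta$, $\mathrm{K}(q)=\mathrm{F}(\pi/2,q)$, $\mathrm{E}(q)=\mathrm{E}(\pi/2,q)$; $\mathrm{am}(\cdot,q)$ is the inverse of $x\mapsto\mathrm{F}(x,q)$, $\mathrm{cn}(x,q)=\cos\mathrm{am}(x,q)$. The function $q\mapsto2\mathrm{E}(q)-\mathrm{K}(q)$ is strictly decreasing on $[0,1)$ with unique zero $q_*\in(0,1)$. On $[1/\sqrt2,1)$ let $f(q)=(4q^4-5q^2+1)\mathrm{K}(q)+(-8q^4+8q^2-1)\mathrm{E}(q)$ and $g(q)=8(2\mathrm{E}(q)-\mathrm{K}(q))^2(2q^2-1)$. $f$ has a unique zero $\hat q\in[1/\sqrt2,1)$; $\hat\lambda:=g(\hat q)\approx0.70107$. $g(1/\sqrt2)=0$, $g$ strictly increasing on $[1/\sqrt2,\hat q]$, strictly decreasing on $[\hat q,q_*]$. For $c\in(0,\hat\lambda]$ let $q_1(c)\in(1/\sqrt2,\hat q]$, $q_2(c)\in[\hat q,q_* )$ solve $g(q)=c$. $A_\ell=\{\gamma\in W^{2,2}(0,1;\mathbb{R}^2): |\gamma'|\neq0$ on $[0,1]$, $\gamma(0)=(0,0),\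 \gamma(1)=(\ell,0)\}$. For $\lambda\ell^2\le\hat\lambda$, $\gamma_{\rm sarc}^{\lambda,\ell,1}:[0,2\mathrm{K}(q)/\alpha]\to\mathbb{R}^2$ is $\gamma(s)=\frac1\alpha\big(2\mathrm{E}(\mathrm{am}(\alpha s-\mathrm{K}(q),q),q)+2\mathrm{E}(q)-\alpha s,\ 2q\,\mathrm{cn}(\alpha s-\mathrm{K}(q),q)\big)$ with $q=q_1(\lambda\ell^2)$, $\alpha=\frac{2}{\ell}(2\mathrm{E}(q)-\mathrm{K}(q))$, and $\gamma_{\rm larc}^{\lambda,\ell,1}$ is the same formula with $q=q_2(\lambda\ell^2)$; $\bar\gamma_{\rm sarc}^{\lambda,\ell,1},\bar\gamma_{\rm larc}^{\lambda,\ell,1}:[0,1]\to\mathbb{R}^2$ are their constant-speed reparametrizations, and $\gamma_{\rm seg}:[0,1]\to\mathbb{R}^2$, $\gamma_{\rm seg}(x)=(\ell x,0)$, is the line segment. The set $\omega\subset A_\ell$ is $\{\gamma_{\rm seg},\bar\gamma_{\rm larc}^{\lambda,\ell,1},\bar\gamma_{\rm sarc}^{\lambda,\ell,1}\}$ if $\lambda\ell^2\le\hat\lambda$, and $\{\gamma_{\rm seg}\}$ if $\lambda\ell^2>\hat\lambda$. *)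

From Stdlib Require Import Reals ClassicalEpsilon.
From Coquelicot Require Import Coquelicot.
Open Scope R_scope.

Definition ellF (x q : R) : R :=
  RInt (fun t => / sqrt (1 - q ^ 2 * (sin t) ^ 2)) 0 x.
Definition ellE (x q : R) : R :=
  RInt (fun t => sqrt (1 - q ^ 2 * (sin t) ^ 2)) 0 x.

Definition ellK (q : R) : R := ellF (PI / 2) q.
Definition ellEc (q : R) : R := ellE (PI / 2) q.

(* Jacobi amplitude: the inverse of x |-> F(x,q)
   (F(.,q) is a strictly increasing bijection R -> R for 0 <= q < 1). *)
Definition am (u q : R) : R :=
  epsilon (inhabits 0) (fun x => ellF x q = u).
Definition cn (u q : R) : R := cos (am u q).

Definition qstar : R :=
  epsilon (inhabits 0) (fun q => 0 < q < 1 /\ 2 * ellEc q - ellK q = 0).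

Definition f_ell (q : R) : R :=
  (4 * q ^ 4 - 5 * q ^ 2 + 1) * ellK q + (- 8 * q ^ 4 + 8 * q ^ 2 - 1) * ellEc q.
Definition g_ell (q : R) : R :=
  8 * (2 * ellEc q - ellK q) ^ 2 * (2 * q ^ 2 - 1).

Definition qhat : R :=
  epsilon (inhabits 0) (fun q => / sqrt 2 <= q < 1 /\ f_ell q = 0).
Definition lamhat : R := g_ell qhat.

Definition q1 (c : R) : R :=
  epsilon (inhabits 0) (fun q => / sqrt 2 < q <= qhat /\ g_ell q = c).
Definition q2 (c : R) : R :=
  epsilon (inhabits 0) (fun q => qhat <= q < qstar /\ g_ell q = c).

(* Plane curves are maps R -> R * R (only their values on the parameter
   interval matter). *)
Definition curve := R -> (R * R)%type.

Definition alpha_of (q l : R) : R := 2 / l * (2 * ellEc q - ellK q).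

(* The elastica formula, on [0, 2K(q)/alpha]. *)
Definition gamma_formula (q l : R) : curve := fun s =>
  let a := alpha_of q l in
  ( / a * (2 * ellE (am (a * s - ellK q) q) q + 2 * ellEc q - a * s),
    / a * (2 * q * cn (a * s - ellK q) q) ).

(* The curves gamma_formula are parametrized by arclength (|gamma'| = 1),
   so their constant-speed reparametrization on [0,1] is x |-> c (L x). *)
Definition reparam01 (c : curve) (L : R) : curve := fun x => c (L * x).

Definition gamma_bar (q l : R) : curve :=
  reparam01 (gamma_formula q l) (2 * ellK q / alpha_of q l).

Definition gamma_sarc_bar (lam l : R) : curve := gamma_bar (q1 (lam * l ^ 2)) l.
Definition gamma_larc_bar (lam l : R) : curve := gamma_bar (q2 (lam * l ^ 2)) l.
Definition gamma_seg (l : R) : curve := fun x => (l * x, 0).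

Definition omega (lam l : R) (c : curve) : Prop :=
  if Rle_dec (lam * l ^ 2) lamhat then
    c = gamma_seg l \/ c = gamma_larc_bar lam l \/ c = gamma_sarc_bar lam l
  else c = gamma_seg l.

(* Put H(x, q) := 2 E(x, q) - F(x, q). Substituting phi = am(2 K x - K), the
   rescaled elastica becomes x |-> (H(phi) + H(pi/2), 2 q cos phi) / alpha with
   phi running monotonically through [-pi/2, pi/2]. H is odd and its integrand
   2 sqrt(1 - q^2 sin^2) - 1 / sqrt(1 - q^2 sin^2) decreases on [0, pi/2], so
   H has no zero in (0, pi/2] as soon as H(pi/2) = 2E(q) - K(q) > 0; then equal
   cosines and equal H-values force equal angles, hence equal parameters.
   Positivity of 2E - K at q_1(c), q_2(c) comes from g(q) = c > 0 together
   with q < q_*, as 2E - K is decreasing in q. Everything else makes the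
   epsilon-definitions meaningful: K and E are continuous in q (their
   integrands are Lipschitz in q), 2E - K is positive at 1/sqrt 2 and negative
   at 0.9999, and the intermediate value theorem produces q_*, q^, q_1, q_2. *)

From Stdlib Require Import Reals ClassicalEpsilon Lra Psatz.
From Coquelicot Require Import Coquelicot.
Open Scope R_scope.

Lemma RInt_sub_lower (f : R -> R) a b c : (forall x y, ex_RInt f x y) ->
  RInt f a c - RInt f a b = RInt f b c.
Proof.
  intros Hex.
  rewrite <- (RInt_Chasles (V:=R_CompleteNormedModule) f a b c) by apply Hex.
  unfold plus; simpl; ring.
Qed.

Lemma RInt_ge_const (f : R -> R) a b m : a <= b -> ex_RInt f a b ->
  (forall t, a <= t <= b -> m <= f t) -> (b - a) * m <= RInt f a b.
Proof.
  intros Hab Hex Hm.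
  assert (H : RInt (fun _ => m) a b <= RInt f a b).
  { apply RInt_le; auto; [apply ex_RInt_const | intros; apply Hm; lra]. }
  rewrite RInt_const in H; exact H.
Qed.

Lemma RInt_le_const (f : R -> R) a b m : a <= b -> ex_RInt f a b ->
  (forall t, a <= t <= b -> f t <= m) -> RInt f a b <= (b - a) * m.
Proof.
  intros Hab Hex Hm.
  assert (H : RInt f a b <= RInt (fun _ => m) a b).
  { apply RInt_le; auto; [apply ex_RInt_const | intros; apply Hm; lra]. }
  rewrite RInt_const in H; exact H.
Qed.

Lemma RInt_0_opp_even (f : R -> R) x : (forall a b, ex_RInt f a b) ->
  (forall t, f (- t) = f t) -> RInt f 0 (- x) = - RInt f 0 x.
Proof.
  intros Hex Hev.
  assert (H := RInt_comp_lin f (-1) 0 0 x).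
  replace (-1 * 0 + 0) with 0 in H by ring.
  replace (-1 * x + 0) with (- x) in H by ring.
  rewrite <- H by apply Hex.
  rewrite (RInt_ext _ (fun y => opp (f y))).
  - rewrite (RInt_opp (V:=R_CompleteNormedModule)) by apply Hex; reflexivity.
  - intros y _; unfold scal; simpl; unfold mult, opp; simpl.
    replace (-1 * y + 0) with (- y) by ring; rewrite Hev; ring.
Qed.

Lemma continuity_pt_lipschitz (f : R -> R) x0 C r : 0 < r -> 0 <= C ->
  (forall x, Rabs (x - x0) < r -> Rabs (f x - f x0) <= C * Rabs (x - x0)) ->
  continuity_pt f x0.
Proof.
  intros Hr HC Hlip eps Heps.
  exists (Rmin r (eps / (C + 1))); split.
  { apply Rmin_pos; [lra | apply Rdiv_lt_0_compat; lra]. }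
  intros x [_ Hx]; simpl in *; unfold R_dist in *.
  assert (Hxr : Rabs (x - x0) < r) by (eapply Rlt_le_trans; [apply Hx | apply Rmin_l]).
  assert (Hxe : Rabs (x - x0) < eps / (C + 1))
    by (eapply Rlt_le_trans; [apply Hx | apply Rmin_r]).
  apply Rmult_lt_compat_r with (r := C + 1) in Hxe; [|lra].
  unfold Rdiv in Hxe; rewrite Rmult_assoc, Rinv_l, Rmult_1_r in Hxe by lra.
  pose proof (Hlip x Hxr); pose proof (Rabs_pos (x - x0)); nra.
Qed.

Lemma IVT_incr_interval (f : R -> R) a b y : a <= b ->
  (forall x, a <= x <= b -> continuity_pt f x) ->
  f a <= y <= f b -> exists x, a <= x <= b /\ f x = y.
Proof.
  intros Hab Hc [Ha Hb].
  destruct (Req_dec (f a) y) as [E|Na]; [exists a; split; [lra | exact E]|].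
  destruct (Req_dec (f b) y) as [E|Nb]; [exists b; split; [lra | exact E]|].
  destruct (Ranalysis5.IVT_interv (fun x => f x - y) a b) as [z [Hz Hfz]].
  - intros x Hx; apply continuity_pt_minus; [apply Hc; lra | apply continuity_pt_const].
    intros u v; reflexivity.
  - destruct Hab as [|E]; [assumption | subst; lra].
  - lra.
  - lra.
  - exists z; simpl in Hfz; split; [exact Hz | lra].
Qed.

Lemma IVT_decr_interval (f : R -> R) a b y : a <= b ->
  (forall x, a <= x <= b -> continuity_pt f x) ->
  f b <= y <= f a -> exists x, a <= x <= b /\ f x = y.
Proof.
  intros Hab Hc Hy.
  destruct (IVT_incr_interval (fun x => - f x) a b (- y)) as [x [Hx Hfx]].
  - exact Hab.
  - intros x Hx; apply continuity_pt_opp, Hc, Hx.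
  - lra.
  - exists x; split; [exact Hx | lra].
Qed.

Lemma cos_eq_half_period a b : - (PI / 2) <= a <= PI / 2 -> - (PI / 2) <= b <= PI / 2 ->
  cos a = cos b -> b = a \/ b = - a.
Proof.
  intros Ha Hb Hab; pose proof PI_RGT_0.
  assert (Habs : Rabs a = Rabs b).
  { apply cos_inj; try (split; [apply Rabs_pos | unfold Rabs; destruct Rcase_abs; lra]).
    unfold Rabs; destruct Rcase_abs; destruct Rcase_abs; rewrite ?cos_neg; exact Hab. }
  revert Habs; unfold Rabs; destruct Rcase_abs; destruct Rcase_abs; intros; lra.
Qed.

Lemma continuity_pt_fun_plus f g x :
  continuity_pt f x -> continuity_pt g x -> continuity_pt (fun y => f y + g y) x.
Proof. apply continuity_pt_plus. Qed.

Lemma continuity_pt_fun_minus f g x :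
  continuity_pt f x -> continuity_pt g x -> continuity_pt (fun y => f y - g y) x.
Proof. apply continuity_pt_minus. Qed.

Lemma continuity_pt_fun_mult f g x :
  continuity_pt f x -> continuity_pt g x -> continuity_pt (fun y => f y * g y) x.
Proof. apply continuity_pt_mult. Qed.

Lemma continuity_pt_fun_const (c x : R) : continuity_pt (fun _ => c) x.
Proof. apply continuity_pt_const; intros a b; reflexivity. Qed.

Lemma continuity_pt_fun_id x : continuity_pt (fun y => y) x.
Proof. apply derivable_continuous_pt, derivable_pt_id. Qed.

Lemma continuity_pt_fun_pow f n x :
  continuity_pt f x -> continuity_pt (fun y => f y ^ n) x.
Proof.
  intros Hf; induction n as [|n IH]; simpl.
  - apply continuity_pt_fun_const.
  - apply continuity_pt_fun_mult; assumption.
Qed.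

Ltac continuity_pt_poly :=
  repeat first [ apply continuity_pt_fun_minus | apply continuity_pt_fun_plus
               | apply continuity_pt_fun_mult | apply continuity_pt_fun_pow
               | apply continuity_pt_fun_const | apply continuity_pt_fun_id ].

Definition ell_arg (q t : R) : R := 1 - q ^ 2 * sin t ^ 2.
Definition ellF_integrand (q t : R) : R := / sqrt (ell_arg q t).
Definition ellE_integrand (q t : R) : R := sqrt (ell_arg q t).
Definition ellH_integrand (q t : R) : R := 2 * ellE_integrand q t - ellF_integrand q t.

Definition ellH (x q : R) : R := 2 * ellE x q - ellF x q.
Definition ellHc (q : R) : R := 2 * ellEc q - ellK q.

Lemma sin_sq_bounds t : 0 <= sin t ^ 2 <= 1.
Proof. pose proof (sin2 t); pose proof (cos2 t); unfold Rsqr in *; split; nra. Qed.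

Lemma ell_arg_bounds q t : q ^ 2 < 1 -> 0 < 1 - q ^ 2 <= ell_arg q t /\ ell_arg q t <= 1.
Proof. intros Hq; pose proof (sin_sq_bounds t); unfold ell_arg; split; [split|]; nra. Qed.

Lemma ellH_integrand_le q q' t t' : q ^ 2 < 1 -> q' ^ 2 < 1 ->
  ell_arg q' t' <= ell_arg q t -> ellH_integrand q' t' <= ellH_integrand q t.
Proof.
  intros Hq Hq' Hle; unfold ellH_integrand, ellE_integrand, ellF_integrand.
  destruct (ell_arg_bounds q' t' Hq') as [[Hpos Hge] _].
  assert (sqrt (ell_arg q' t') <= sqrt (ell_arg q t)) by (apply sqrt_le_1_alt; lra).
  assert (0 < sqrt (ell_arg q' t')) by (apply sqrt_lt_R0; lra).
  assert (/ sqrt (ell_arg q t) <= / sqrt (ell_arg q' t')) by (apply Rinv_le_contravar; lra).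
  lra.
Qed.

Section Integrands.

Variable q : R.
Hypothesis Hq : q ^ 2 < 1.

Lemma ellF_integrand_continuous t : continuous (ellF_integrand q) t.
Proof.
  apply (ex_derive_continuous (V:=R_NormedModule)).
  destruct (ell_arg_bounds q t Hq) as [[Hpos Hge] _].
  unfold ellF_integrand, ell_arg in *; auto_derive.
  split; [lra | split; [apply Rgt_not_eq, sqrt_lt_R0; lra | easy]].
Qed.

Lemma ellE_integrand_continuous t : continuous (ellE_integrand q) t.
Proof.
  apply (ex_derive_continuous (V:=R_NormedModule)).
  destruct (ell_arg_bounds q t Hq) as [[Hpos Hge] _].
  unfold ellE_integrand, ell_arg in *; auto_derive; lra.
Qed.

Lemma ellF_integrand_ex_RInt a b : ex_RInt (ellF_integrand q) a b.
Proof. apply (ex_RInt_continuous (V:=R_CompleteNormedModule)); intros; apply ellF_integrand_continuous. Qed.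

Lemma ellE_integrand_ex_RInt a b : ex_RInt (ellE_integrand q) a b.
Proof. apply (ex_RInt_continuous (V:=R_CompleteNormedModule)); intros; apply ellE_integrand_continuous. Qed.

Lemma ellH_integrand_ex_RInt a b : ex_RInt (ellH_integrand q) a b.
Proof.
  apply (ex_RInt_minus (V:=R_CompleteNormedModule) (fun t => 2 * ellE_integrand q t)).
  - apply (ex_RInt_scal (V:=R_CompleteNormedModule)), ellE_integrand_ex_RInt.
  - apply ellF_integrand_ex_RInt.
Qed.

Lemma ellF_integrand_ge1 t : 1 <= ellF_integrand q t.
Proof.
  destruct (ell_arg_bounds q t Hq) as [[Hpos Hge] Hle]; unfold ellF_integrand.
  assert (0 < sqrt (ell_arg q t)) by (apply sqrt_lt_R0; lra).
  assert (sqrt (ell_arg q t) <= 1) by (rewrite <- sqrt_1; apply sqrt_le_1_alt; lra).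
  rewrite <- Rinv_1; apply Rinv_le_contravar; lra.
Qed.

Lemma ellH_integrand_antitone t t' : 0 <= t <= t' -> t' <= PI / 2 ->
  ellH_integrand q t' <= ellH_integrand q t.
Proof.
  intros Htt' Ht'; pose proof PI_RGT_0.
  apply ellH_integrand_le; auto; unfold ell_arg.
  assert (0 <= sin t) by (apply sin_ge_0; lra).
  assert (sin t <= sin t') by (apply sin_incr_1; lra).
  assert (sin t ^ 2 <= sin t' ^ 2) by nra.
  assert (0 <= q ^ 2) by nra.
  nra.
Qed.

End Integrands.

Lemma ellF_integrand_even q t : ellF_integrand q (- t) = ellF_integrand q t.
Proof. unfold ellF_integrand, ell_arg; rewrite sin_neg; do 3 f_equal; ring. Qed.

Lemma ellE_integrand_even q t : ellE_integrand q (- t) = ellE_integrand q t.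
Proof. unfold ellE_integrand, ell_arg; rewrite sin_neg; do 2 f_equal; ring. Qed.

(** * Incomplete integrals and the amplitude *)

Section Incomplete.

Variable q : R.
Hypothesis Hq : q ^ 2 < 1.

Lemma ellF_0 : ellF 0 q = 0.
Proof. exact (RInt_point (V:=R_CompleteNormedModule) 0 (ellF_integrand q)). Qed.

Lemma ellF_odd x : ellF (- x) q = - ellF x q.
Proof.
  apply (RInt_0_opp_even (ellF_integrand q));
    [apply ellF_integrand_ex_RInt, Hq | apply ellF_integrand_even].
Qed.

Lemma ellE_odd x : ellE (- x) q = - ellE x q.
Proof.
  apply (RInt_0_opp_even (ellE_integrand q));
    [apply ellE_integrand_ex_RInt, Hq | apply ellE_integrand_even].
Qed.

Lemma ellH_odd x : ellH (- x) q = - ellH x q.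
Proof. unfold ellH; rewrite ellF_odd, ellE_odd; ring. Qed.

Lemma ellF_lt x y : x < y -> ellF x q < ellF y q.
Proof.
  intros Hxy.
  assert (E : ellF y q - ellF x q = RInt (ellF_integrand q) x y).
  { apply RInt_sub_lower; intros; apply ellF_integrand_ex_RInt, Hq. }
  assert ((y - x) * 1 <= RInt (ellF_integrand q) x y).
  { apply RInt_ge_const; [lra | apply ellF_integrand_ex_RInt, Hq |].
    intros; apply ellF_integrand_ge1, Hq. }
  lra.
Qed.

Lemma ellK_pos : 0 < ellK q.
Proof. rewrite <- ellF_0; apply ellF_lt; pose proof PI_RGT_0; lra. Qed.

Lemma ellF_continuity x : continuity_pt (fun y => ellF y q) x.
Proof.
  apply continuity_pt_filterlim, (ex_derive_continuous (V:=R_NormedModule) (fun y => ellF y q)).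
  exists (ellF_integrand q x).
  apply (is_derive_RInt (ellF_integrand q) (fun y => ellF y q) 0 x).
  - apply filter_forall; intros y.
    apply (RInt_correct (V:=R_CompleteNormedModule)), ellF_integrand_ex_RInt, Hq.
  - apply ellF_integrand_continuous, Hq.
Qed.

Lemma am_spec u : - ellK q <= u <= ellK q ->
  ellF (am u q) q = u /\ - (PI / 2) <= am u q <= PI / 2.
Proof.
  intros Hu; unfold ellK in Hu; pose proof PI_RGT_0.
  assert (Hex : exists x, ellF x q = u).
  { destruct (IVT_incr_interval (fun x => ellF x q) (- (PI / 2)) (PI / 2) u)
      as [x [_ Hx]]; [lra | intros; apply ellF_continuity | | exists x; exact Hx].
    rewrite ellF_odd; lra. }
  pose proof (epsilon_spec (inhabits 0) (fun x => ellF x q = u) Hex) as Ham.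
  fold (am u q) in Ham; split; [exact Ham | split].
  - destruct (Rle_or_lt (- (PI / 2)) (am u q)) as [h|h]; [exact h|].
    apply ellF_lt in h; rewrite ellF_odd in h; lra.
  - destruct (Rle_or_lt (am u q) (PI / 2)) as [h|h]; [exact h|].
    apply ellF_lt in h; lra.
Qed.

Lemma ellH_RInt x : ellH x q = RInt (ellH_integrand q) 0 x.
Proof.
  unfold ellH, ellH_integrand.
  rewrite (RInt_minus (V:=R_CompleteNormedModule) (fun t => 2 * ellE_integrand q t)).
  - rewrite (RInt_scal (V:=R_CompleteNormedModule)) by apply ellE_integrand_ex_RInt, Hq.
    reflexivity.
  - apply (ex_RInt_scal (V:=R_CompleteNormedModule)), ellE_integrand_ex_RInt, Hq.
  - apply ellF_integrand_ex_RInt, Hq.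
Qed.

Hypothesis HH : 0 < ellHc q.

(* The integrand decreases: either it is positive on [0, th], or it is
   nonpositive on [th, pi/2] and then H(th) >= H(pi/2) > 0. *)
Lemma ellH_pos th : 0 < th <= PI / 2 -> 0 < ellH th q.
Proof.
  intros Hth; rewrite ellH_RInt.
  change (ellHc q) with (ellH (PI / 2) q) in HH; rewrite ellH_RInt in HH.
  destruct (Rlt_or_le 0 (ellH_integrand q th)) as [P|P].
  - assert ((th - 0) * ellH_integrand q th <= RInt (ellH_integrand q) 0 th).
    { apply RInt_ge_const; [lra | apply ellH_integrand_ex_RInt, Hq |].
      intros; apply ellH_integrand_antitone; auto; lra. }
    nra.
  - assert (Htail : RInt (ellH_integrand q) th (PI / 2) <= (PI / 2 - th) * 0).
    { apply RInt_le_const; [lra | apply ellH_integrand_ex_RInt, Hq |].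
      intros t Ht; apply Rle_trans with (ellH_integrand q th); [|lra].
      apply ellH_integrand_antitone; auto; lra. }
    rewrite <- (RInt_sub_lower (ellH_integrand q) 0 th (PI / 2)) in Htail
      by (intros; apply ellH_integrand_ex_RInt, Hq).
    lra.
Qed.

Lemma ellH_eq0 th : - (PI / 2) <= th <= PI / 2 -> ellH th q = 0 -> th = 0.
Proof.
  intros Hth H0.
  destruct (Rtotal_order th 0) as [L|[L|L]]; [| exact L |].
  - assert (Hpos : 0 < ellH (- th) q) by (apply ellH_pos; lra).
    rewrite ellH_odd in Hpos; lra.
  - assert (0 < ellH th q) by (apply ellH_pos; lra); lra.
Qed.

Lemma ellH_cos_injective a b : - (PI / 2) <= a <= PI / 2 -> - (PI / 2) <= b <= PI / 2 ->
  ellH a q = ellH b q -> cos a = cos b -> a = b.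
Proof.
  intros Ha Hb HHab Hcos.
  destruct (cos_eq_half_period a b Ha Hb Hcos) as [E|E]; [auto|].
  subst b; rewrite ellH_odd in HHab.
  assert (a = 0) by (apply ellH_eq0; [exact Ha | lra]); subst; lra.
Qed.

End Incomplete.

Definition injective01 (c : curve) : Prop :=
  forall x y, 0 <= x <= 1 -> 0 <= y <= 1 -> c x = c y -> x = y.

Lemma gamma_seg_injective l : 0 < l -> injective01 (gamma_seg l).
Proof.
  intros Hl x y _ _ Hxy; unfold gamma_seg in Hxy; injection Hxy as H.
  apply Rmult_eq_reg_l in H; lra.
Qed.

Lemma alpha_of_pos q l : 0 < ellHc q -> 0 < l -> 0 < alpha_of q l.
Proof. intros HH Hl; apply Rmult_lt_0_compat; [apply Rdiv_lt_0_compat; lra | exact HH]. Qed.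

(* alpha s - K(q) = 2 K(q) x - K(q) =: u and u = F(am u), which turns the
   first coordinate 2E(am u) + 2E(q) - alpha s into H(am u) + H(pi/2). *)
Lemma gamma_bar_am q l x : q ^ 2 < 1 -> 0 < ellHc q -> 0 < l -> 0 <= x <= 1 ->
  let phi := am (2 * ellK q * x - ellK q) q in
  gamma_bar q l x =
    (/ alpha_of q l * (ellH phi q + ellHc q), / alpha_of q l * (2 * q * cos phi)).
Proof.
  intros Hq HH Hl Hx phi.
  pose proof (alpha_of_pos q l HH Hl) as Ha; pose proof (ellK_pos q Hq) as HK.
  assert (Hphi : ellF phi q = 2 * ellK q * x - ellK q) by (apply am_spec; auto; nra).
  unfold gamma_bar, reparam01, gamma_formula, cn; cbv zeta; fold phi.
  replace (alpha_of q l * (2 * ellK q / alpha_of q l * x)) with (2 * ellK q * x)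
    by (field; lra).
  fold phi; f_equal; f_equal; unfold ellH, ellHc; rewrite Hphi; ring.
Qed.

Lemma gamma_bar_injective q l : q ^ 2 < 1 -> q <> 0 -> 0 < ellHc q -> 0 < l ->
  injective01 (gamma_bar q l).
Proof.
  intros Hq Hq0 HH Hl x y Hx Hy.
  pose proof (alpha_of_pos q l HH Hl) as Ha; pose proof (ellK_pos q Hq) as HK.
  rewrite (gamma_bar_am q l x), (gamma_bar_am q l y) by assumption.
  set (u := 2 * ellK q * x - ellK q); set (v := 2 * ellK q * y - ellK q).
  intros Huv; injection Huv as H1 H2.
  apply Rmult_eq_reg_l in H1; [| apply Rinv_neq_0_compat; lra].
  apply Rmult_eq_reg_l in H2; [| apply Rinv_neq_0_compat; lra].
  apply Rmult_eq_reg_l in H2; [| lra].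
  destruct (am_spec q Hq u) as [Fu Ru]; [unfold u; nra|].
  destruct (am_spec q Hq v) as [Fv Rv]; [unfold v; nra|].
  assert (Huv : u = v).
  { rewrite <- Fu, <- Fv; f_equal; apply (ellH_cos_injective q); auto; lra. }
  unfold u, v in Huv; nra.
Qed.

(** * Dependence on the modulus *)

Lemma sqrt_lipschitz mu a b : 0 < mu -> mu <= a -> mu <= b ->
  Rabs (sqrt a - sqrt b) * (2 * sqrt mu) <= Rabs (a - b).
Proof.
  intros Hmu Ha Hb.
  assert (sqrt mu <= sqrt a) by (apply sqrt_le_1_alt; lra).
  assert (sqrt mu <= sqrt b) by (apply sqrt_le_1_alt; lra).
  assert (0 < sqrt mu) by (apply sqrt_lt_R0; lra).
  assert (E : a - b = (sqrt a - sqrt b) * (sqrt a + sqrt b)).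
  { ring_simplify; rewrite !pow2_sqrt by lra; ring. }
  rewrite E, Rabs_mult, (Rabs_right (sqrt a + sqrt b)) by lra.
  pose proof (Rabs_pos (sqrt a - sqrt b)); nra.
Qed.

Lemma ell_arg_lipschitz q q' t : Rabs q <= 1 -> Rabs q' <= 1 ->
  Rabs (ell_arg q t - ell_arg q' t) <= 2 * Rabs (q - q').
Proof.
  intros Hq Hq'; pose proof (sin_sq_bounds t); unfold ell_arg.
  replace (1 - q ^ 2 * sin t ^ 2 - (1 - q' ^ 2 * sin t ^ 2))
    with ((q - q') * (- (q + q') * sin t ^ 2)) by ring.
  rewrite Rabs_mult, Rabs_mult, Rabs_Ropp, (Rabs_right (sin t ^ 2)) by lra.
  pose proof (Rabs_triang q q'); pose proof (Rabs_pos (q - q')); pose proof (Rabs_pos (q + q')).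
  assert (Rabs (q + q') * sin t ^ 2 <= 2) by nra.
  nra.
Qed.

Lemma sq_le_of_abs_le q m : Rabs q <= m -> q ^ 2 <= m ^ 2.
Proof.
  intros H; pose proof (Rabs_pos q).
  replace (q ^ 2) with (Rabs q ^ 2) by (unfold Rabs; destruct Rcase_abs; ring); nra.
Qed.

Section Lipschitz.

Variables m q q' t : R.
Hypotheses (Hm : 0 <= m < 1) (Hqm : Rabs q <= m) (Hq'm : Rabs q' <= m).

Let Hmu : 0 < 1 - m ^ 2.
Proof. nra. Qed.

Let Harg : 1 - m ^ 2 <= ell_arg q t /\ 1 - m ^ 2 <= ell_arg q' t.
Proof.
  pose proof (sq_le_of_abs_le q m Hqm); pose proof (sq_le_of_abs_le q' m Hq'm).
  destruct (ell_arg_bounds q t) as [[_ H1] _]; [nra|].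
  destruct (ell_arg_bounds q' t) as [[_ H2] _]; [nra|].
  lra.
Qed.

Lemma ellE_integrand_lipschitz :
  Rabs (ellE_integrand q t - ellE_integrand q' t) <= / sqrt (1 - m ^ 2) * Rabs (q - q').
Proof.
  destruct Harg as [H1 H2].
  pose proof (sqrt_lipschitz (1 - m ^ 2) _ _ Hmu H1 H2).
  pose proof (ell_arg_lipschitz q q' t ltac:(lra) ltac:(lra)).
  assert (0 < sqrt (1 - m ^ 2)) by (apply sqrt_lt_R0; lra).
  unfold ellE_integrand; apply Rmult_le_reg_r with (2 * sqrt (1 - m ^ 2)); [lra|].
  apply Rle_trans with (2 * Rabs (q - q')); [lra | right; field; lra].
Qed.

Lemma ellF_integrand_lipschitz :
  Rabs (ellF_integrand q t - ellF_integrand q' t)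
    <= / sqrt (1 - m ^ 2) / (1 - m ^ 2) * Rabs (q - q').
Proof.
  destruct Harg as [H1 H2]; pose proof ellE_integrand_lipschitz as HE.
  unfold ellE_integrand, ellF_integrand in *.
  set (A := ell_arg q t) in *; set (B := ell_arg q' t) in *.
  assert (Sm : 0 < sqrt (1 - m ^ 2)) by (apply sqrt_lt_R0; lra).
  assert (SA : sqrt (1 - m ^ 2) <= sqrt A) by (apply sqrt_le_1_alt; lra).
  assert (SB : sqrt (1 - m ^ 2) <= sqrt B) by (apply sqrt_le_1_alt; lra).
  assert (Smm : sqrt (1 - m ^ 2) * sqrt (1 - m ^ 2) = 1 - m ^ 2) by (apply sqrt_sqrt; lra).
  replace (/ sqrt A - / sqrt B) with ((sqrt B - sqrt A) * / (sqrt A * sqrt B))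
    by (field; split; lra).
  rewrite Rabs_mult, Rabs_inv, (Rabs_right (sqrt A * sqrt B)), (Rabs_minus_sym (sqrt B)) by nra.
  assert (Hinv : / (sqrt A * sqrt B) <= / (1 - m ^ 2)).
  { apply Rinv_le_contravar; [lra | rewrite <- Smm; apply Rmult_le_compat; lra]. }
  pose proof (Rabs_pos (sqrt A - sqrt B)); pose proof (Rabs_pos (q - q')).
  apply Rle_trans with (/ sqrt (1 - m ^ 2) * Rabs (q - q') * / (1 - m ^ 2)).
  - apply Rmult_le_compat; auto; left; apply Rinv_0_lt_compat; nra.
  - right; field; lra.
Qed.

End Lipschitz.

Lemma continuity_pt_RInt_param (k : R -> R -> R) (C : R -> R) q0 : q0 ^ 2 < 1 ->
  (forall q a b, q ^ 2 < 1 -> ex_RInt (k q) a b) ->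
  (forall m, 0 <= m < 1 -> 0 <= C m) ->
  (forall m q q' t, 0 <= m < 1 -> Rabs q <= m -> Rabs q' <= m ->
     Rabs (k q t - k q' t) <= C m * Rabs (q - q')) ->
  continuity_pt (fun q => RInt (k q) 0 (PI / 2)) q0.
Proof.
  intros Hq0 Hex HC Hlip; pose proof PI_RGT_0.
  assert (Ha : Rabs q0 < 1).
  { rewrite <- (Rabs_R1); apply Rsqr_lt_abs_0; unfold Rsqr; nra. }
  set (m := (1 + Rabs q0) / 2); pose proof (Rabs_pos q0).
  assert (Hm : 0 <= m < 1) by (unfold m; lra).
  apply continuity_pt_lipschitz with (C m * (PI / 2)) ((1 - Rabs q0) / 2);
    [lra | pose proof (HC m Hm); nra |].
  intros q Hq.
  assert (Hqm : Rabs q <= m).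
  { unfold m; pose proof (Rabs_triang (q - q0) q0).
    replace (q - q0 + q0) with q in * by ring; lra. }
  assert (Hq2 : q ^ 2 < 1) by (pose proof (sq_le_of_abs_le q m Hqm); nra).
  rewrite <- (RInt_minus (V:=R_CompleteNormedModule)) by auto.
  apply Rle_trans with ((PI / 2 - 0) * (C m * Rabs (q - q0))); [| right; ring].
  apply abs_RInt_le_const; [lra | apply (ex_RInt_minus (V:=R_CompleteNormedModule)); auto |].
  intros t _; apply Hlip; unfold m in *; lra.
Qed.

Lemma ellK_continuity q : q ^ 2 < 1 -> continuity_pt ellK q.
Proof.
  intros Hq.
  apply (continuity_pt_RInt_param ellF_integrand (fun m => / sqrt (1 - m ^ 2) / (1 - m ^ 2)));
    auto using ellF_integrand_ex_RInt, ellF_integrand_lipschitz.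
  intros m Hm; assert (0 < 1 - m ^ 2) by nra.
  assert (0 < sqrt (1 - m ^ 2)) by (apply sqrt_lt_R0; lra).
  left; apply Rdiv_lt_0_compat; [apply Rinv_0_lt_compat|]; lra.
Qed.

Lemma ellEc_continuity q : q ^ 2 < 1 -> continuity_pt ellEc q.
Proof.
  intros Hq.
  apply (continuity_pt_RInt_param ellE_integrand (fun m => / sqrt (1 - m ^ 2)));
    auto using ellE_integrand_ex_RInt, ellE_integrand_lipschitz.
  intros m Hm; assert (0 < 1 - m ^ 2) by nra.
  left; apply Rinv_0_lt_compat, sqrt_lt_R0; lra.
Qed.

Lemma ellHc_continuity q : q ^ 2 < 1 -> continuity_pt ellHc q.
Proof. intros Hq; unfold ellHc; continuity_pt_poly; auto using ellK_continuity, ellEc_continuity. Qed.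

Lemma f_ell_continuity q : q ^ 2 < 1 -> continuity_pt f_ell q.
Proof. intros Hq; unfold f_ell; continuity_pt_poly; auto using ellK_continuity, ellEc_continuity. Qed.

Lemma g_ell_continuity q : q ^ 2 < 1 -> continuity_pt g_ell q.
Proof. intros Hq; unfold g_ell; continuity_pt_poly; auto using ellK_continuity, ellEc_continuity. Qed.

Lemma ellHc_antitone q q' : 0 <= q <= q' -> q' ^ 2 < 1 -> ellHc q' <= ellHc q.
Proof.
  intros Hqq' Hq'; assert (Hq : q ^ 2 < 1) by nra; pose proof PI_RGT_0.
  change (ellH (PI / 2) q' <= ellH (PI / 2) q); rewrite !ellH_RInt by assumption.
  apply RInt_le; [lra | apply ellH_integrand_ex_RInt; auto | apply ellH_integrand_ex_RInt; auto |].
  intros t _; apply ellH_integrand_le; auto.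
  unfold ell_arg; pose proof (sin_sq_bounds t); assert (q ^ 2 <= q' ^ 2) by nra; nra.
Qed.

Lemma ellEc_pos q : q ^ 2 < 1 -> 0 < ellEc q.
Proof.
  intros Hq; pose proof PI_RGT_0.
  apply (RInt_gt_0 (ellE_integrand q)); [lra | | intros; apply ellE_integrand_continuous, Hq].
  intros t _; destruct (ell_arg_bounds q t Hq) as [[? ?] _]; apply sqrt_lt_R0; lra.
Qed.

(** * Signs of 2E - K *)

Lemma inv_sqrt2_facts : 0 < / sqrt 2 < 1 /\ (/ sqrt 2) ^ 2 = 1 / 2.
Proof.
  assert (E : (/ sqrt 2) ^ 2 = 1 / 2) by (rewrite pow_inv, pow2_sqrt by lra; field).
  assert (0 < / sqrt 2) by (apply Rinv_0_lt_compat, sqrt_lt_R0; lra).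
  split; [split; nra | exact E].
Qed.

(* At q^2 = 1/2 the integrand of H equals cos^2 t / sqrt(1 - sin^2 t / 2). *)
Lemma ellHc_inv_sqrt2_pos : 0 < ellHc (/ sqrt 2).
Proof.
  destruct inv_sqrt2_facts as [_ Hq2]; set (q := / sqrt 2) in *.
  pose proof PI_RGT_0.
  change (0 < ellH (PI / 2) q); rewrite ellH_RInt by lra.
  apply RInt_gt_0; [lra | |].
  - intros t Ht; unfold ellH_integrand, ellE_integrand, ellF_integrand.
    destruct (ell_arg_bounds q t) as [[Hpos Hge] _]; [lra|].
    assert (Hsq : 0 < sqrt (ell_arg q t)) by (apply sqrt_lt_R0; lra).
    assert (Hcos : 0 < cos t) by (apply cos_gt_0; lra).
    replace (2 * sqrt (ell_arg q t) - / sqrt (ell_arg q t))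
      with ((2 * sqrt (ell_arg q t) ^ 2 - 1) / sqrt (ell_arg q t)) by (field; lra).
    rewrite pow2_sqrt by lra; apply Rdiv_lt_0_compat; [| exact Hsq].
    unfold ell_arg; rewrite Hq2.
    pose proof (sin2 t); pose proof (cos2 t); unfold Rsqr in *; nra.
  - intros t _; unfold ellH_integrand.
    apply (continuous_minus (V:=R_NormedModule) (fun t => 2 * ellE_integrand q t)).
    + apply (continuous_scal_r (V:=R_NormedModule) 2 (ellE_integrand q)).
      apply ellE_integrand_continuous; lra.
    + apply ellF_integrand_continuous; lra.
Qed.

Definition ellF_minorant (q t : R) : R := cos t / (1 - q ^ 2 * sin t ^ 2).

Lemma ellF_minorant_le q t : q ^ 2 < 1 -> ellF_minorant q t <= ellF_integrand q t.
Proof.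
  intros Hq; destruct (ell_arg_bounds q t Hq) as [[Hpos Hge] Hle].
  unfold ellF_minorant, ellF_integrand; fold (ell_arg q t).
  assert (Hsq : 0 < sqrt (ell_arg q t)) by (apply sqrt_lt_R0; lra).
  assert (SS : sqrt (ell_arg q t) ^ 2 = ell_arg q t) by (apply pow2_sqrt; lra).
  assert (Hc : cos t <= sqrt (ell_arg q t)).
  { destruct (Rle_or_lt (cos t) 0); [lra|].
    rewrite <- (sqrt_pow2 (cos t)) by lra; apply sqrt_le_1_alt.
    pose proof (cos2 t); pose proof (sin_sq_bounds t); unfold ell_arg, Rsqr in *; nra. }
  replace (/ sqrt (ell_arg q t)) with (sqrt (ell_arg q t) / sqrt (ell_arg q t) ^ 2)
    by (field; lra).
  rewrite SS.
  unfold Rdiv; apply Rmult_le_compat_r; [left; apply Rinv_0_lt_compat|]; lra.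
Qed.

(* d/dt [ln ((1 + q sin t) / (1 - q sin t)) / (2q)] = cos t / (1 - q^2 sin^2 t). *)
Lemma is_RInt_ellF_minorant q : 0 < q < 1 ->
  is_RInt (ellF_minorant q) 0 (PI / 2) (/ (2 * q) * ln ((1 + q) / (1 - q))).
Proof.
  intros Hq.
  set (G t := / (2 * q) * ln ((1 + q * sin t) / (1 - q * sin t))).
  replace (/ (2 * q) * ln ((1 + q) / (1 - q))) with (G (PI / 2) - G 0).
  2:{ unfold G; rewrite sin_PI2, sin_0, !Rmult_0_r, Rmult_1_r, Rplus_0_r, Rminus_0_r.
      rewrite Rdiv_1_r, ln_1; ring. }
  apply (is_RInt_derive (V:=R_CompleteNormedModule) G).
  - intros x _; pose proof (SIN_bound x).
    assert (0 < 1 - q * sin x) by nra; assert (0 < 1 + q * sin x) by nra.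
    unfold G, ellF_minorant; auto_derive.
    + split; [lra | split; [apply Rdiv_lt_0_compat; lra | easy]].
    + field; repeat split; try lra; nra.
  - intros x _; apply (ex_derive_continuous (V:=R_NormedModule)).
    pose proof (sin_sq_bounds x); unfold ellF_minorant; auto_derive.
    assert (q ^ 2 < 1) by nra; nra.
Qed.

Lemma exp_8_lt : exp 8 < 19999.
Proof.
  pose proof exp_le_3; pose proof (exp_pos 1).
  replace 8 with (1 + 1 + 1 + 1 + (1 + 1 + 1 + 1)) by ring; rewrite !exp_plus.
  assert (exp 1 * exp 1 <= 9) by nra.
  assert (exp 1 * exp 1 * (exp 1 * exp 1) <= 81) by nra.
  nra.
Qed.

(* 2E - K <= pi - ln((1 + q) / (1 - q)) / (2q), since E <= pi/2 and the
   integrand of K dominates the minorant; at q = 0.9999 the logarithm exceeds 8. *)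
Lemma ellHc_near1_neg : ellHc (9999 / 10000) < 0.
Proof.
  set (q := 9999 / 10000).
  assert (Hq : 0 < q < 1) by (unfold q; lra); assert (Hq2 : q ^ 2 < 1) by nra.
  pose proof PI_RGT_0; pose proof PI_4.
  set (L := / (2 * q) * ln ((1 + q) / (1 - q))).
  assert (Hi : is_RInt (fun t => 2 - ellF_minorant q t) 0 (PI / 2) ((PI / 2 - 0) * 2 - L)).
  { apply (is_RInt_minus (V:=R_NormedModule) (fun _ => 2)).
    - apply (is_RInt_const (V:=R_NormedModule)).
    - apply is_RInt_ellF_minorant, Hq. }
  assert (Hle : ellHc q <= (PI / 2 - 0) * 2 - L).
  { rewrite <- (is_RInt_unique _ _ _ _ Hi).
    change (ellH (PI / 2) q <= RInt (fun t => 2 - ellF_minorant q t) 0 (PI / 2)).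
    rewrite ellH_RInt by exact Hq2.
    apply RInt_le; [lra | apply ellH_integrand_ex_RInt, Hq2 | eexists; apply Hi |].
    intros t _; unfold ellH_integrand; pose proof (ellF_minorant_le q t Hq2).
    destruct (ell_arg_bounds q t Hq2) as [[? ?] ?].
    assert (ellE_integrand q t <= 1) by (rewrite <- sqrt_1; apply sqrt_le_1_alt; lra).
    lra. }
  assert (HL : PI < L).
  { unfold L; replace ((1 + q) / (1 - q)) with 19999 by (unfold q; field).
    assert (8 < ln 19999) by (rewrite <- (ln_exp 8); apply ln_increasing, exp_8_lt; apply exp_pos).
    apply Rmult_lt_reg_l with (2 * q); [lra|].
    rewrite <- Rmult_assoc, Rinv_r by lra; unfold q in *; lra. }
  lra.
Qed.

(** * The constants q_*, q^, q_1, q_2 *)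

Lemma qstar_spec : 0 < qstar < 1 /\ ellHc qstar = 0.
Proof.
  destruct inv_sqrt2_facts as [Hs Hs2].
  apply (epsilon_spec (inhabits 0) (fun q => 0 < q < 1 /\ 2 * ellEc q - ellK q = 0)).
  destruct (IVT_decr_interval ellHc (/ sqrt 2) (9999 / 10000) 0) as [x [Hx Hx0]].
  - nra.
  - intros x Hx; apply ellHc_continuity; nra.
  - pose proof ellHc_near1_neg; pose proof ellHc_inv_sqrt2_pos; lra.
  - exists x; split; [lra | exact Hx0].
Qed.

Lemma ellHc_nonneg_below_qstar q : 0 <= q <= qstar -> 0 <= ellHc q.
Proof.
  intros Hq; destruct qstar_spec as [Hs H0].
  rewrite <- H0; apply ellHc_antitone; [lra | nra].
Qed.

Lemma inv_sqrt2_lt_qstar : / sqrt 2 < qstar.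
Proof.
  destruct inv_sqrt2_facts as [Hs _]; destruct qstar_spec as [Hq H0].
  destruct (Rlt_or_le (/ sqrt 2) qstar) as [|Hle]; [assumption|].
  pose proof (ellHc_antitone qstar (/ sqrt 2) ltac:(lra) ltac:(nra)).
  pose proof ellHc_inv_sqrt2_pos; lra.
Qed.

Lemma f_ell_neg q : 1 / 2 < q ^ 2 < 1 -> ellHc q <= 0 -> f_ell q < 0.
Proof.
  intros Hq Hh; pose proof (ellEc_pos q ltac:(lra)); unfold ellHc in Hh; unfold f_ell.
  replace (q ^ 4) with ((q ^ 2) ^ 2) by ring; set (p := q ^ 2) in *.
  assert (4 * p ^ 2 - 5 * p + 1 < 0) by nra.
  assert ((4 * p ^ 2 - 5 * p + 1) * ellK q <= (4 * p ^ 2 - 5 * p + 1) * (2 * ellEc q)) by nra.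
  nra.
Qed.

Lemma f_ell_inv_sqrt2 : f_ell (/ sqrt 2) = ellHc (/ sqrt 2) / 2.
Proof.
  destruct inv_sqrt2_facts as [_ Hq2]; unfold f_ell, ellHc.
  replace ((/ sqrt 2) ^ 4) with (((/ sqrt 2) ^ 2) ^ 2) by ring; rewrite Hq2; field.
Qed.

Lemma qhat_spec : / sqrt 2 <= qhat < 1 /\ f_ell qhat = 0.
Proof.
  destruct inv_sqrt2_facts as [Hs Hs2]; pose proof inv_sqrt2_lt_qstar; destruct qstar_spec as [Hq H0].
  apply (epsilon_spec (inhabits 0) (fun q => / sqrt 2 <= q < 1 /\ f_ell q = 0)).
  destruct (IVT_decr_interval f_ell (/ sqrt 2) qstar 0) as [x [Hx Hx0]].
  - lra.
  - intros x Hx; apply f_ell_continuity; nra.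
  - rewrite f_ell_inv_sqrt2; pose proof ellHc_inv_sqrt2_pos.
    assert (f_ell qstar < 0) by (apply f_ell_neg; [split; nra | lra]).
    lra.
  - exists x; split; [lra | exact Hx0].
Qed.

Lemma qhat_lt_qstar : qhat < qstar.
Proof.
  destruct inv_sqrt2_facts as [Hs Hs2]; pose proof inv_sqrt2_lt_qstar.
  destruct qstar_spec as [Hq H0]; destruct qhat_spec as [Hh Hf].
  destruct (Rlt_or_le qhat qstar) as [|Hle]; [assumption|].
  assert (ellHc qhat <= 0) by (rewrite <- H0; apply ellHc_antitone; [lra | nra]).
  assert (f_ell qhat < 0) by (apply f_ell_neg; [split; nra | assumption]).
  lra.
Qed.

Lemma g_ell_inv_sqrt2 : g_ell (/ sqrt 2) = 0.
Proof. destruct inv_sqrt2_facts as [_ Hq2]; unfold g_ell; rewrite Hq2; field. Qed.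

Lemma g_ell_qstar : g_ell qstar = 0.
Proof. destruct qstar_spec as [_ H0]; unfold g_ell; fold (ellHc qstar); rewrite H0; ring. Qed.

Lemma q1_spec c : 0 < c <= lamhat -> / sqrt 2 < q1 c <= qhat /\ g_ell (q1 c) = c.
Proof.
  intros Hc; unfold lamhat in Hc.
  destruct inv_sqrt2_facts as [Hs _]; pose proof qhat_lt_qstar; destruct qstar_spec as [Hq _].
  destruct qhat_spec as [Hh _].
  apply (epsilon_spec (inhabits 0) (fun q => / sqrt 2 < q <= qhat /\ g_ell q = c)).
  destruct (IVT_incr_interval g_ell (/ sqrt 2) qhat c) as [x [Hx Hx0]].
  - lra.
  - intros x Hx; apply g_ell_continuity; nra.
  - rewrite g_ell_inv_sqrt2; lra.
  - exists x; split; [split; [| lra] | exact Hx0].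
    destruct Hx as [[|E] _]; [assumption | subst; rewrite g_ell_inv_sqrt2 in Hc; lra].
Qed.

Lemma q2_spec c : 0 < c <= lamhat -> qhat <= q2 c < qstar /\ g_ell (q2 c) = c.
Proof.
  intros Hc; unfold lamhat in Hc.
  destruct inv_sqrt2_facts as [Hs _]; pose proof qhat_lt_qstar; destruct qstar_spec as [Hq _].
  destruct qhat_spec as [Hh _].
  apply (epsilon_spec (inhabits 0) (fun q => qhat <= q < qstar /\ g_ell q = c)).
  destruct (IVT_decr_interval g_ell qhat qstar c) as [x [Hx Hx0]].
  - lra.
  - intros x Hx; apply g_ell_continuity; nra.
  - rewrite g_ell_qstar; lra.
  - exists x; split; [split; [lra |] | exact Hx0].
    destruct Hx as [_ [|E]]; [assumption | subst; rewrite g_ell_qstar in Hc; lra].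
Qed.

Lemma gamma_bar_injective_of_g_ell q l c : 0 < l -> 0 < c -> 0 < q < qstar ->
  g_ell q = c -> injective01 (gamma_bar q l).
Proof.
  intros Hl Hc Hq Hg; destruct qstar_spec as [Hs _].
  assert (HH : 0 < ellHc q).
  { destruct (ellHc_nonneg_below_qstar q ltac:(lra)) as [|E]; [assumption|].
    unfold g_ell in Hg; fold (ellHc q) in Hg; rewrite <- E in Hg; lra. }
  apply gamma_bar_injective; [nra | lra | exact HH | exact Hl].
Qed.

Theorem lemma5p2 (lam l : R) (Hlam : 0 < lam) (Hl : 0 < l) (c : curve) :
  omega lam l c ->
  forall x y : R, 0 <= x <= 1 -> 0 <= y <= 1 -> c x = c y -> x = y.
Proof.
  intros Hom; change (injective01 c).
  assert (Hc : 0 < lam * l ^ 2) by (apply Rmult_lt_0_compat; [lra | apply pow_lt; lra]).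
  destruct inv_sqrt2_facts as [Hs _].
  unfold omega in Hom; destruct (Rle_dec (lam * l ^ 2) lamhat) as [Hle|_].
  - destruct Hom as [ -> | [ -> | -> ]].
    + apply gamma_seg_injective, Hl.
    + destruct (q2_spec (lam * l ^ 2)) as [Hq Hg]; [lra|].
      apply (gamma_bar_injective_of_g_ell _ l (lam * l ^ 2)); auto.
      pose proof qhat_spec; lra.
    + destruct (q1_spec (lam * l ^ 2)) as [Hq Hg]; [lra|].
      apply (gamma_bar_injective_of_g_ell _ l (lam * l ^ 2)); auto.
      pose proof qhat_lt_qstar; lra.
  - subst c; apply gamma_seg_injective, Hl.
Qed.
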